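(* Let $p,q\le 5$ and let $f$ (with $p$ arguments) and $g$ (with $q$ arguments) be real functions whose values depend only on the relative order of their argument lists, with $|f|\le 5$ and $|g|\le 5$. If $\pi$ is a uniformly distributed permutation of $\{1^{n_1},\dots,h^{n_h}\}$ with $n=\sum_a n_a\ge p+q$, then \[\Bigl|\mathrm{Cov}\bigl(f(\pi(1),\dots,\pi(p)),\,g(\pi(p+1),\dots,\pi(p+q))\bigr)\Bigr|\le C/n\] for an absolute constant $C$ (independent of $h$, $n$, the $n_a$, $f$, $g$).
   Context: A permutation of the multiset $\{1^{n_1},\dots,h^{n_h}\}$ ($n_a$ positive integers) is a sequence $(\pi(1),\dots,\pi(n))$ in which each $a$ occurs exactly $n_a$ times; uniformly distributed means all such sequences are equally likely. The relative order of a sequence $s_1,\dots,s_p$ is the ordered partition of $\{1,\dots,p\}$ obtained by putting $q$ and $r$ in the same block iff $s_q=s_r$, with blocks ordered by increasing common value of $s_q$. *)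

From HB Require Import structures.
From mathcomp Require Import all_boot all_order all_algebra.
Set Implicit Arguments. Unset Strict Implicit. Unset Printing Implicit Defensive.
Import Order.TTheory GRing.Theory Num.Theory.

Definition rel_order (s : seq nat) : seq (seq nat) :=
  [seq [seq i <- iota 0 (size s) | nth 0 s i == v] | v <- sort leq (undup s)].

Definition depends_on_rel_order (R : Type) (p : nat) (f : seq nat -> R) :=
  forall s t, size s = p -> size t = p -> rel_order s = rel_order t -> f s = f t.

(* Permutations of the multiset {0^{ns 0}, ..., (h-1)^{ns (h-1)}} of total size n
   (values shifted by -1 w.r.t. the paper; relative orders are unaffected). *)
Definition multiset_perms (h n : nat) (ns : 'I_h -> nat) : {set n.-tuple 'I_h} :=
  [set t : n.-tuple 'I_h | [forall a : 'I_h, count_mem a t == ns a]].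

Section Expect.
Variables (R : realFieldType) (h n : nat) (ns : 'I_h -> nat).
Local Open Scope ring_scope.

Definition unif_expect (X : n.-tuple 'I_h -> R) : R :=
  (\sum_(t in multiset_perms n ns) X t) / (#|multiset_perms n ns|)%:R.

Definition unif_cov (X Y : n.-tuple 'I_h -> R) : R :=
  unif_expect (fun t => X t * Y t) - unif_expect X * unif_expect Y.
End Expect.

Definition as_nats {h n : nat} (t : n.-tuple 'I_h) : seq nat := map val (val t).

Set Warnings "-notation-overridden,-ambiguous-paths".
From HB Require Import structures.
From mathcomp Require Import all_boot all_order all_algebra all_fingroup zify ring.
Set Implicit Arguments. Unset Strict Implicit.
Import Order.TTheory GRing.Theory Num.Theory.

(* Reorderings s of the n positions act transitively on the multiset
   permutations and preserve the uniform law, so averaging Y (s t) over s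
   recovers E[Y]; this writes the covariance as the average over s of
   E[X t (Y t - Y (s t))].  X only reads the positions P = [0, p) and Y the
   positions Q = [p, p + q).  If s maps no point of Q into P, some r fixes P
   pointwise and agrees with s on Q, and reindexing by r shows the s-term
   vanishes.  A uniform s maps a point of Q into P with probability at most
   |P| |Q| / n, which gives the bound 2 * 5 * 5 * 25 / n. *)

Lemma perm_map_uniq (T : finType) (a b : seq T) :
  uniq a -> uniq b -> size a = size b -> exists r : {perm T}, map r a = b.
Proof.
case: a => [|x0 a'] ua ub sab; first by exists 1%g; case: b ub sab.
set a := x0 :: a' in ua sab *.
have complete c : uniq c ->
    let C := c ++ [seq x <- enum T | x \notin c] in uniq C /\ size C = #|T| /\ C =i predT.
  move=> uc C; have mC : C =i predT by move=> x; rewrite mem_cat mem_filter mem_enum andbT orbN.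
  have uC : uniq C.
    rewrite cat_uniq uc filter_uniq ?enum_uniq // andbT.
    by apply/hasPn => x; rewrite mem_filter => /andP[].
  split=> //; split=> //; rewrite cardE; apply/perm_size/uniq_perm; rewrite ?enum_uniq //.
  by move=> x; rewrite mC mem_enum.
have [uA [sA mA]] := complete a ua; have [uB [sB mB]] := complete b ub.
set A := a ++ _ in uA sA mA; set B := b ++ _ in uB sB mB.
pose f x := nth x B (index x A).
have iA x : index x A < size B by rewrite sB -sA index_mem mA.
have f_inj : injective f.
  move=> x y; rewrite /f (set_nth_default y x (iA x)) => /eqP.
  rewrite nth_uniq // => /eqP e.
  by rewrite -(nth_index x (mA x)) -(nth_index x (mA y)) e.
exists (perm f_inj).
apply: (@eq_from_nth _ x0); rewrite size_map // => i ia.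
rewrite (nth_map x0) // permE /f index_cat mem_nth // index_uniq //.
by rewrite nth_cat -sab ia; apply: set_nth_default; rewrite -sab.
Qed.

Lemma perm_extend (T : finType) (D : {set T}) (u : T -> T) :
  {in D &, injective u} -> exists r : {perm T}, {in D, r =1 u}.
Proof.
move=> u_inj; have [r hr] : exists r : {perm T}, map r (enum D) = map u (enum D).
  by apply: perm_map_uniq; rewrite ?size_map // ?map_inj_in_uniq ?enum_uniq //;
    move=> x y; rewrite !mem_enum; apply: u_inj.
by exists r => x xD; move/eq_in_map: hr => /(_ x); rewrite mem_enum; apply.
Qed.

Lemma card_perm_mapsto (T : finType) (x y : T) :
  (#|T| * #|[set s : {perm T} | s x == y]|)%N = #|{perm T}|.
Proof.
have card_mapsto_le y1 y2 :
    #|[set s : {perm T} | s x == y1]| <= #|[set s : {perm T} | s x == y2]|.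
  have -> : [set s : {perm T} | s x == y2] =
      [set (s * tperm y1 y2)%g | s in [set s : {perm T} | s x == y1]].
    apply/setP => s; rewrite inE; apply/idP/imsetP => [/eqP sx | [s' + ->]].
      exists (s * tperm y1 y2)%g; last by rewrite -mulgA tperm2 mulg1.
      by rewrite inE permM sx tpermR.
    by rewrite inE => /eqP s'x; rewrite permM s'x tpermL.
  by rewrite card_imset //; apply: mulIg.
have -> : #|{perm T}| = (\sum_(z : T) #|[set s : {perm T} | s x == z]|)%N.
  rewrite -sum1_card (partition_big (fun s : {perm T} => s x) predT) //=.
  by apply: eq_bigr => z _; rewrite -sum1_card; apply: eq_bigl => s; rewrite inE.
rewrite -sum_nat_const; apply: eq_big => // z _.
by apply/eqP; rewrite eqn_leq !card_mapsto_le.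
Qed.

Definition hitting_perms (T : finType) (Q P : {set T}) : {set {perm T}} :=
  [set s : {perm T} | [exists i in Q, s i \in P]].

Lemma card_hitting_perms (T : finType) (Q P : {set T}) :
  (#|T| * #|hitting_perms Q P| <= #|Q| * #|P| * #|{perm T}|)%N.
Proof.
have union_bound : (#|hitting_perms Q P| <=
    \sum_(i in Q) \sum_(j in P) #|[set s : {perm T} | s i == j]|)%N.
  rewrite -sum1_card big_mkcond /=.
  have -> : (\sum_(i in Q) \sum_(j in P) #|[set s : {perm T} | s i == j]| =
      \sum_(s : {perm T}) \sum_(i in Q) \sum_(j in P) (s i == j))%N.
    rewrite [RHS]exchange_big /=; apply: eq_bigr => i _; rewrite [RHS]exchange_big /=.
    apply: eq_bigr => j _; rewrite -sum1_card big_mkcond /=.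
    by apply: eq_bigr => s _; rewrite inE; case: (_ == _).
  apply: leq_sum => s _; rewrite inE; case: existsP => // -[i /andP[iQ siP]].
  by rewrite (bigD1 i) //= (bigD1 (s i)) //= eqxx -addnA leq_addr.
apply: leq_trans (leq_mul (leqnn _) union_bound) _.
rewrite big_distrr /= (eq_bigr (fun=> #|P| * #|{perm T}|)%N) ?sum_nat_const ?mulnA //.
move=> i _; rewrite big_distrr /= (eq_bigr (fun=> #|{perm T}|)) ?sum_nat_const //.
by move=> j _; rewrite card_perm_mapsto.
Qed.

Section PermutePositions.
Variables (h n : nat) (ns : 'I_h -> nat).
Implicit Types (t : n.-tuple 'I_h) (s r : {perm 'I_n}).
Local Notation S := (multiset_perms n ns).

Definition permute s t : n.-tuple 'I_h := [tuple tnth t (s i) | i < n].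

Lemma permuteM s r t : permute s (permute r t) = permute (s * r)%g t.
Proof. by apply: eq_from_tnth => i; rewrite !tnth_mktuple permM. Qed.

Lemma permute1 t : permute 1%g t = t.
Proof. by apply: eq_from_tnth => i; rewrite !tnth_mktuple perm1. Qed.

Lemma perm_eq_permute s t : perm_eq (permute s t) t.
Proof. by apply/tuple_permP; exists s. Qed.

Lemma permute_multiset s t : (permute s t \in S) = (t \in S).
Proof.
by rewrite !inE; apply: eq_forallb => a; rewrite (seq.permP (perm_eq_permute s t)).
Qed.

Lemma multiset_perms_transitive t t' : t \in S -> t' \in S -> exists s, t' = permute s t.
Proof.
rewrite !inE => /forallP ct /forallP ct'.
have /tuple_permP[s ts] : perm_eq t' t.
  by apply/allP => a _ /=; rewrite (eqP (ct a)) (eqP (ct' a)).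
by exists s; apply: val_inj.
Qed.

Lemma sum_permute (V : nmodType) (F : n.-tuple 'I_h -> V) s :
  (\sum_(t in S) F (permute s t) = \sum_(t in S) F t)%R.
Proof.
rewrite [RHS](reindex (permute s)) /=; last first.
  by exists (permute s^-1) => t _; rewrite permuteM ?mulVg ?mulgV permute1.
by apply: eq_bigl => t; rewrite permute_multiset.
Qed.

Definition depends_on_pos (T : Type) (P : {set 'I_n}) (X : n.-tuple 'I_h -> T) :=
  forall t t', {in P, forall i, tnth t i = tnth t' i} -> X t = X t'.

Lemma permute_depends (T : Type) (P : {set 'I_n}) (X : n.-tuple 'I_h -> T) s r t :
  depends_on_pos P X -> {in P, s =1 r} -> X (permute s t) = X (permute r t).
Proof. by move=> dX sr; apply: dX => i iP; rewrite !tnth_mktuple sr. Qed.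

Definition window (a m : nat) : {set 'I_n} := [set i : 'I_n | a <= i < a + m].

Lemma card_window a m : #|window a m| <= m.
Proof.
rewrite cardE -(size_map val) -[m](size_iota a); apply: uniq_leq_size.
  by rewrite map_inj_uniq ?enum_uniq //; apply: val_inj.
by move=> x /mapP[i]; rewrite mem_enum inE mem_iota size_iota => ? ->.
Qed.

Lemma disjoint_windows a m b k : a + m <= b -> [disjoint window a m & window b k].
Proof.
move=> amb; rewrite -setI_eq0; apply/eqP/setP => i; rewrite !inE; lia.
Qed.

Lemma nth_as_nats t (i : 'I_n) : nth 0 (as_nats t) i = tnth t i.
Proof. by rewrite /as_nats (nth_map (tnth t i)) ?size_tuple // -tnth_nth. Qed.

Lemma size_as_nats t : size (as_nats t) = n.
Proof. by rewrite /as_nats size_map size_tuple. Qed.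

Lemma window_depends a m : depends_on_pos (window a m) (fun t => take m (drop a (as_nats t))).
Proof.
move=> t t' tt'; apply: (@eq_from_nth _ 0); first by rewrite !size_take !size_drop !size_as_nats.
move=> k; rewrite size_take_min size_drop size_as_nats => kn.
have [km akn] : k < m /\ a + k < n by split; lia.
rewrite !nth_take // !nth_drop -[a + k]/(nat_of_ord (Ordinal akn)) !nth_as_nats.
by rewrite tt' // inE /=; lia.
Qed.

End PermutePositions.

Local Open Scope ring_scope.

Lemma hitting_perms_ratio (R : numFieldType) (T : finType) (Q P : {set T}) :
  #|hitting_perms Q P|%:R / #|{perm T}|%:R <= (#|Q| * #|P|)%N%:R / #|T|%:R :> R.
Proof.
have [T0 | T_gt0] := posnP #|T|.
  rewrite (_ : hitting_perms Q P = set0) ?cards0 ?mul0r ?divr_ge0 //.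
  by apply/setP => s; rewrite !inE; apply/existsP => -[i _]; move: T0; rewrite (cardD1 i).
have perm_gt0 : (0 < #|{perm T}|)%N by apply/card_gt0P; exists 1%g.
rewrite ler_pdivrMr ?ltr0n // mulrAC ler_pdivlMr ?ltr0n // -!natrM ler_nat.
by rewrite mulnC card_hitting_perms.
Qed.

Section Covariance.
Variables (R : realFieldType) (h n : nat) (ns : 'I_h -> nat).
Implicit Types X Y : n.-tuple 'I_h -> R.
Local Notation S := (multiset_perms n ns).
Local Notation N := (#|S|%:R : R).
Local Notation M := (#|{perm 'I_n}|%:R : R).

Lemma sum_orbit_const Y t t0 : t \in S -> t0 \in S ->
  \sum_(s : {perm 'I_n}) Y (permute s t) = \sum_(s : {perm 'I_n}) Y (permute s t0).
Proof.
move=> tS t0S; have [r ->] := multiset_perms_transitive t0S tS.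
by rewrite [RHS](reindex_inj (mulIg r)); apply: eq_bigr => s _; rewrite permuteM.
Qed.

Lemma unif_covE X Y : unif_cov ns X Y =
  (\sum_(s : {perm 'I_n}) \sum_(t in S) X t * (Y t - Y (permute s t))) / (M * N).
Proof.
rewrite /unif_cov /unif_expect; have [S0 | [t0 t0S]] := set_0Vmem S.
  by rewrite S0 !big_set0 big1 ?mul0r ?subrr // => s _; rewrite big_set0.
pose W := \sum_(s : {perm 'I_n}) Y (permute s t0).
have sumY : M * \sum_(t in S) Y t = N * W.
  transitivity (\sum_(t in S) \sum_(s : {perm 'I_n}) Y (permute s t)).
    rewrite exchange_big /= (eq_bigr _ (fun s _ => sum_permute ns Y s)).
    by rewrite sumr_const mulr_natl.
  rewrite (eq_bigr (fun=> W)) => [|t tS]; last exact: sum_orbit_const.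
  by rewrite sumr_const mulr_natl.
have sumXY : \sum_(s : {perm 'I_n}) \sum_(t in S) X t * Y (permute s t) =
    (\sum_(t in S) X t) * W.
  rewrite exchange_big /= mulr_suml; apply: eq_bigr => t tS.
  by rewrite -mulr_sumr (sum_orbit_const _ tS t0S).
have N0 : N != 0 by rewrite pnatr_eq0 -lt0n; apply/card_gt0P; exists t0.
have M0 : M != 0 by rewrite pnatr_eq0 -lt0n; apply/card_gt0P; exists 1%g.
have -> : \sum_(s : {perm 'I_n}) \sum_(t in S) X t * (Y t - Y (permute s t)) =
    M * \sum_(t in S) X t * Y t - (\sum_(t in S) X t) * W.
  rewrite -sumXY mulr_natl -sumr_const -sumrB; apply: eq_bigr => s _.
  by rewrite -sumrB; apply: eq_bigr => t _; rewrite mulrBr.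
have -> : \sum_(t in S) Y t = N * W / M by rewrite -sumY mulrC mulKf.
by field; rewrite N0 M0.
Qed.

Lemma unif_cov_le (B : {set {perm 'I_n}}) X Y (a b : R) :
  0 <= a -> 0 <= b -> (forall t, `|X t| <= a) -> (forall t, `|Y t| <= b) ->
  (forall s, s \notin B -> \sum_(t in S) X t * Y (permute s t) = \sum_(t in S) X t * Y t) ->
  `|unif_cov ns X Y| <= 2 * a * b * #|B|%:R / M.
Proof.
move=> a0 b0 Xa Yb good; rewrite unif_covE.
have bound_term s : `|\sum_(t in S) X t * (Y t - Y (permute s t))| <= 2 * a * b * N.
  rewrite mulr_natr -sumr_const; apply: le_trans (ler_norm_sum _ _ _) (ler_sum _ _) => t _.
  rewrite normrM -mulrA mulrCA; apply: ler_pM => //; apply: le_trans (ler_normB _ _) _.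
  by rewrite mulr_natl mulr2n lerD.
have M0 : 0 < M by rewrite ltr0n; apply/card_gt0P; exists 1%g.
have [S0 | [t0 t0S]] := set_0Vmem S.
  rewrite S0 big1 => [|s _]; last exact: big_set0.
  by rewrite mul0r normr0 divr_ge0 ?ler0n ?mulr_ge0 ?ler0n.
have N0 : 0 < N by rewrite ltr0n; apply/card_gt0P; exists t0.
rewrite normrM normfV (gtr0_norm (mulr_gt0 M0 N0)) ler_pdivrMr ?mulr_gt0 //.
rewrite (bigID (mem B)) /= [X in _ + X]big1 ?addr0 => [|s /good]; last first.
  move=> sums_eq; rewrite (eq_bigr (fun t => X t * Y t - X t * Y (permute s t))) => [|t _].
    by rewrite sumrB sums_eq subrr.
  exact: mulrBr.
apply: le_trans (ler_norm_sum _ _ _) _; apply: le_trans (ler_sum _ (fun s _ => bound_term s)) _.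
by rewrite sumr_const -[_ *+ #|B|]mulr_natr mulrA divfK ?gt_eqF // mulrAC.
Qed.

Lemma sum_permute_nonhitting (P Q : {set 'I_n}) X Y s :
  [disjoint P & Q] -> depends_on_pos P X -> depends_on_pos Q Y ->
  s \notin hitting_perms Q P ->
  \sum_(t in S) X t * Y (permute s t) = \sum_(t in S) X t * Y t.
Proof.
move=> PQ dX dY; rewrite inE negb_exists => /forallP miss.
pose u i := if i \in P then i else s i.
have u_inj : {in P :|: Q &, injective u}.
  have sQ i : i \in P :|: Q -> i \notin P -> s i \notin P.
    by rewrite inE => /orP[-> // | iQ _]; move: (miss i); rewrite iQ.
  move=> i j iPQ jPQ; rewrite /u; case: ifP => iP; case: ifP => jP //.
  - by move=> eij; move: (sQ j jPQ (negbT jP)); rewrite -eij iP.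
  - by move=> eji; move: (sQ i iPQ (negbT iP)); rewrite eji jP.
  - exact: perm_inj.
have [r ru] := perm_extend u_inj.
have rP : {in P, r =1 (1%g : {perm 'I_n})} by move=> i iP; rewrite ru ?inE ?iP // /u iP perm1.
have rQ : {in Q, r =1 s}.
  by move=> i iQ; rewrite ru ?inE ?iQ ?orbT // /u (disjointFl PQ iQ).
rewrite -(sum_permute ns (fun t => X t * Y t) r); apply: eq_bigr => t _.
by rewrite (permute_depends _ dX rP) permute1 (permute_depends _ dY rQ).
Qed.

Lemma unif_cov_local_le (P Q : {set 'I_n}) X Y (a b : R) :
  [disjoint P & Q] -> depends_on_pos P X -> depends_on_pos Q Y ->
  0 <= a -> 0 <= b -> (forall t, `|X t| <= a) -> (forall t, `|Y t| <= b) ->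
  `|unif_cov ns X Y| <= 2 * a * b * (#|Q| * #|P|)%N%:R / n%:R.
Proof.
move=> PQ dX dY a0 b0 Xa Yb.
apply: le_trans (unif_cov_le (B := hitting_perms Q P) a0 b0 Xa Yb _) _.
  by move=> s; apply: sum_permute_nonhitting.
have := hitting_perms_ratio R Q P; rewrite card_ord => ratio.
by rewrite -!mulrA !ler_wpM2l ?mulr_ge0.
Qed.

End Covariance.

Theorem lemma2p10 :
  exists C : nat,
  forall (R : realFieldType) (p q h n : nat) (ns : 'I_h -> nat)
         (f g : seq nat -> R),
    (p <= 5)%N -> (q <= 5)%N ->
    depends_on_rel_order p f -> depends_on_rel_order q g ->
    (forall s, size s = p -> `|f s| <= 5) ->
    (forall s, size s = q -> `|g s| <= 5) ->
    (forall a, (0 < ns a)%N) ->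
    n = (\sum_(a < h) ns a)%N ->
    (p + q <= n)%N ->
    `| unif_cov ns (fun t : n.-tuple 'I_h => f (take p (as_nats t)))
                   (fun t : n.-tuple 'I_h => g (take q (drop p (as_nats t)))) |
      <= C%:R / n%:R.
Proof.
exists 1250%N => R p q h n ns f g p5 q5 _ _ f5 g5 _ _ pqn.
have fX (t : n.-tuple 'I_h) : `|f (take p (as_nats t))| <= 5.
  by apply: f5; rewrite size_takel // size_as_nats; lia.
have gY (t : n.-tuple 'I_h) : `|g (take q (drop p (as_nats t)))| <= 5.
  by apply: g5; rewrite size_takel // size_drop size_as_nats; lia.
have dX : depends_on_pos (window n 0 p) (fun t : n.-tuple 'I_h => f (take p (as_nats t))).
  by move=> t t' /window_depends; rewrite !drop0 => ->.
have dY : depends_on_pos (window n p q)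
    (fun t : n.-tuple 'I_h => g (take q (drop p (as_nats t)))).
  by move=> t t' /window_depends ->.
have PQ : [disjoint window n 0 p & window n p q] by apply: disjoint_windows; rewrite add0n.
apply: le_trans (unif_cov_local_le ns PQ dX dY _ _ fX gY) _ => //.
rewrite ler_wpM2r ?invr_ge0 // -!natrM ler_nat.
have := card_window n 0 p; have := card_window n p q; nia.
Qed.
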